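(* Let $t$ be a term such that $t\to_h^{(b,e,m)}u$ with $u\in\mathcal{M}$ (a head-reduction sequence with exactly $b$ steps of kind (b), $e$ steps of kind (e) and $m$ steps of kind (m)). Then there exists a tight derivation $\Phi\triangleright\Gamma\vdash^{(b,e,m,|u|)}t:\mathtt{t}$ in system $\mathscr{E}$, for some context $\Gamma$ and tight type $\mathtt{t}$.
   Context: Pair pattern calculus: patterns $p,q ::= x\mid\langle p,q\rangle$ (linear); $\mathrm{var}(p)$ = variables of $p$; $p\# q$ means disjoint variables. Terms $t,u ::= x\mid\lambda p.t\mid\langle t,u\rangle\mid t\,u\mid t[p/u]$, $\mathrm{var}(p)$ bound in $t$ in $\lambda p.t$ and $t[p/u]$; $\mathrm{fv}$ as usual; terms modulo $\alpha$. List contexts $L::=\Box\mid L[p/u]$, $L\langle t\rangle$ plugging (possibly capturing), $\mathrm{bv}(L)$ variables bound by $L$; $t\{x/u\}$ capture-avoiding substitution; $\mathrm{abs}(t)$ iff $t=L\langle\lambda p.u\rangle$. Head reduction ($t\not\to_h$: no $u$ with $t\to_h u$): (b) $L\langle\lambda p.t\rangle u\to_h L\langle t[p/u]\rangle$ if $\mathrm{bv}(L)\cap\mathrm{fv}(u)=\emptyset$; (m) $t[\langle p_1,p_2\rangle/L\langle\langle u_1,u_2\rangle\rangle]\to_h L\langle t[p_1/u_1][p_2/u_2]\rangle$ if $t\not\to_h$ and $\mathrm{bv}(L)\cap\mathrm{fv}(t)=\emptyset$; (e) $t[x/u]\to_h t\{x/u\}$ if $t\not\to_h$; closure: $\lambda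 p.t\to_h\lambda p.t'$ if $t\to_h t'$; $tu\to_h t'u$ if $t\to_h t'$ and not $\mathrm{abs}(t)$; $t[p/u]\to_h t'[p/u]$ if $t\to_h t'$; $t[p/u]\to_h t[p/u']$ if $t\not\to_h$, $p$ not a variable, $u\to_h u'$. The kind of a step is the base rule (b), (e) or (m) it uses. Canonical forms $\mathcal{M} ::= \lambda p.\mathcal{M}\mid\langle t,t\rangle\mid\mathcal{M}[\langle p_1,p_2\rangle/\mathcal{N}]\mid\mathcal{N}$, $\mathcal{N} ::= x\mid\mathcal{N}\,t\mid\mathcal{N}[\langle p_1,p_2\rangle/\mathcal{N}]$, with size $|x|=0$, $|\langle t,u\rangle|=1$, $|\mathcal{N}t|=|\mathcal{N}|+1$, $|\lambda p.\mathcal{M}|=|\mathcal{M}|+1$, $|\mathcal{M}[\langle p_1,p_2\rangle/\mathcal{N}]|=|\mathcal{M}|+|\mathcal{N}|+1$. System $\mathscr{E}$. Types: tight types $\mathtt{t} ::= \bullet_{\mathcal{N}}\mid\bullet_{\mathcal{M}}$; types $\sigma ::= \mathtt{t}\mid \mathcal{A}_1\times\mathcal{A}_2\mid \mathcal{A}\to\sigma$; multi-types $\mathcal{A} ::= [\sigma_k]_{k\in K}$ (finite, possibly empty). Contexts map variables to multi-types, $\mathrm{dom}(\Gamma)$ = variables with non-empty multi-type; $\wedge$ pointwise multiset union; $\Gamma|_p$ restriction to $\mathrm{var}(p)$; $\Gamma\setminus\mathrm{var}(p)$ removal. $\mathrm{tight}(\sigma)$ iff $\sigma\in\{\bullet_{\mathcal{N}},\bullet_{\mathcal{M}}\}$,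 extended elementwise. Rules: (pat_v) $x:\mathcal{A}\Vdash^{(1,0,0)} x:\mathcal{A}$. (pat_×) from $\Gamma\Vdash^{(e_p,m_p,f_p)}p:\mathcal{A}$, $\Delta\Vdash^{(e_q,m_q,f_q)}q:\mathcal{B}$, $p\#q$ infer $\Gamma\wedge\Delta\Vdash^{(e_p+e_q,1+m_p+m_q,f_p+f_q)}\langle p,q\rangle:[\mathcal{A}\times\mathcal{B}]$. (pat_p) if $\mathrm{dom}(\Gamma)\subseteq\mathrm{var}(\langle p,q\rangle)$ and $\mathrm{tight}(\Gamma)$ then $\Gamma\Vdash^{(0,0,1)}\langle p,q\rangle:[\bullet_{\mathcal{N}}]$. (ax) $x:[\sigma]\vdash^{(0,0,0,0)}x:\sigma$. (abs) from $\Gamma\vdash^{(b,e,m,f)}t:\sigma$ and $\Gamma|_p\Vdash^{(e_p,m_p,f_p)}p:\mathcal{A}$ infer $\Gamma\setminus\mathrm{var}(p)\vdash^{(b+1,e+e_p,m+m_p,f+f_p)}\lambda p.t:\mathcal{A}\to\sigma$. (abs_p) from $\Gamma\vdash^{(b,e,m,f)}t:\mathtt{t}$ ($\mathtt{t}$ tight) and $\mathrm{tight}(\Gamma|_p)$ infer $\Gamma\setminus\mathrm{var}(p)\vdash^{(b,e,m,f+1)}\lambda p.t:\bullet_{\mathcal{M}}$. (many) from $(\Gamma_k\vdash^{(b_k,e_k,m_k,f_k)}t:\sigma_k)_{k\in K}$ infer $\wedge_k\Gamma_k\vdash^{(\sum b_k,\sum e_k,\sum m_k,\sum f_k)}t:[\sigma_k]_{k\in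 K}$. (app) from $\Gamma\vdash^{(b_t,e_t,m_t,f_t)}t:\mathcal{A}\to\sigma$, $\Delta\vdash^{(b_u,e_u,m_u,f_u)}u:\mathcal{A}$ infer $\Gamma\wedge\Delta\vdash^{(b_t+b_u,e_t+e_u,m_t+m_u,f_t+f_u)}t\,u:\sigma$. (app_p) from $\Gamma\vdash^{(b,e,m,f)}t:\bullet_{\mathcal{N}}$ infer $\Gamma\vdash^{(b,e,m,f+1)}t\,u:\bullet_{\mathcal{N}}$. (pair) from $\Gamma\vdash^{(b_t,e_t,m_t,f_t)}t:\mathcal{A}$, $\Delta\vdash^{(b_u,e_u,m_u,f_u)}u:\mathcal{B}$ infer $\Gamma\wedge\Delta\vdash^{(b_t+b_u,e_t+e_u,m_t+m_u,f_t+f_u)}\langle t,u\rangle:\mathcal{A}\times\mathcal{B}$. (pair_p) $\vdash^{(0,0,0,1)}\langle t,u\rangle:\bullet_{\mathcal{M}}$. (match) from $\Gamma\vdash^{(b_t,e_t,m_t,f_t)}t:\sigma$, $\Gamma|_p\Vdash^{(e_p,m_p,f_p)}p:\mathcal{A}$, $\Delta\vdash^{(b_u,e_u,m_u,f_u)}u:\mathcal{A}$ infer $(\Gamma\setminus\mathrm{var}(p))\wedge\Delta\vdash^{(b_t+b_u,e_t+e_u+e_p,m_t+m_u+m_p,f_t+f_u+f_p)}t[p/u]:\sigma$. A derivation is tight if its context and its type are tight. *)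

(* Pair pattern calculus, head reduction and system E,
   with terms represented in de Bruijn style (terms modulo alpha). *)
From Stdlib Require Import List Arith PeanoNat Permutation.
Import ListNotations.

(* A pattern binds its leaves; since
   binders are nameless, linearity and p # q hold by construction.
   Leaves are numbered left to right: in the body of a binder with
   pattern p, de Bruijn index i < nv p denotes the i-th leaf of p, and
   index i >= nv p denotes the outer variable i - nv p. *)
Inductive pat : Type :=
| PVar : pat
| PPair : pat -> pat -> pat.

Fixpoint nv (p : pat) : nat :=
  match p with PVar => 1 | PPair p q => nv p + nv q end.

(* t ::= x | \p.t | <t,u> | t u | t[p/u]   (var(p) bound in t only) *)
Inductive term : Type :=
| Var : nat -> term
| Lam : pat -> term -> term
| Pair : term -> term -> term
| App : term -> term -> term
| Sub : term -> pat -> term -> term.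

Fixpoint shift (d c : nat) (t : term) : term :=
  match t with
  | Var x => if c <=? x then Var (x + d) else Var x
  | Lam p s => Lam p (shift d (c + nv p) s)
  | Pair s u => Pair (shift d c s) (shift d c u)
  | App s u => App (shift d c s) (shift d c u)
  | Sub s p u => Sub (shift d (c + nv p) s) p (shift d c u)
  end.

(* subst c u t : capture-avoiding substitution of u for index c
   (indices above c are decremented); t{x/u} = subst 0 u t when x is the
   variable bound by a variable pattern. *)
Fixpoint subst (c : nat) (u t : term) : term :=
  match t with
  | Var x => if x <? c then Var x
             else if x =? c then shift c 0 u else Var (pred x)
  | Lam p s => Lam p (subst (c + nv p) u s)
  | Pair s s' => Pair (subst c u s) (subst c u s')
  | App s s' => App (subst c u s) (subst c u s')
  | Sub s p s' => Sub (subst (c + nv p) u s) p (subst c u s')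
  end.

Inductive lctx : Type :=
| Hole : lctx
| LSub : lctx -> pat -> term -> lctx.

Fixpoint plug (L : lctx) (t : term) : term :=
  match L with Hole => t | LSub L p u => Sub (plug L t) p u end.

Fixpoint nb (L : lctx) : nat :=
  match L with Hole => 0 | LSub L p _ => nb L + nv p end.

Definition is_abs (t : term) : Prop :=
  exists L p s, t = plug L (Lam p s).

Inductive kind : Type := Kb | Ke | Km.

(* Defined by structural
   recursion on t so that the negative premises "t not->_h" on strict
   subterms are allowed.  The side conditions bv(L) # fv(_) of the named
   presentation are realised by shifting (alpha-renaming). *)
Fixpoint hstep (t : term) : kind -> term -> Prop :=
  match t with
  | Var _ => fun _ _ => False
  | Pair _ _ => fun _ _ => False
  | Lam p s => fun k r => exists s', hstep s k s' /\ r = Lam p s'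
  | App s u => fun k r =>
      (* (b) L<\p.s0> u ->_h L<s0[p/u]> *)
      (k = Kb /\ exists L p s0,
          s = plug L (Lam p s0) /\
          r = plug L (Sub s0 p (shift (nb L) 0 u)))
      \/
      (~ is_abs s /\ exists s', hstep s k s' /\ r = App s' u)
  | Sub s p u => fun k r =>
      (* (m) s[<p1,p2>/L<<u1,u2>>] ->_h L<s[p1/u1][p2/u2]> if s not->_h *)
      (k = Km /\ (forall k' s', ~ hstep s k' s') /\
        exists p1 p2 L u1 u2,
          p = PPair p1 p2 /\ u = plug L (Pair u1 u2) /\
          r = plug L (Sub (Sub (shift (nb L) (nv p1 + nv p2) s) p1
                               (shift (nv p2) 0 u1))
                          p2 u2))
      \/
      (k = Ke /\ (forall k' s', ~ hstep s k' s') /\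
        p = PVar /\ r = subst 0 u s)
      \/
      (exists s', hstep s k s' /\ r = Sub s' p u)
      \/
      ((forall k' s', ~ hstep s k' s') /\ p <> PVar /\
        exists u', hstep u k u' /\ r = Sub s p u')
  end.

Inductive hsteps : term -> nat -> nat -> nat -> term -> Prop :=
| hs_refl t : hsteps t 0 0 0 t
| hs_b t t' b e m u : hstep t Kb t' -> hsteps t' b e m u -> hsteps t (S b) e m u
| hs_e t t' b e m u : hstep t Ke t' -> hsteps t' b e m u -> hsteps t b (S e) m u
| hs_m t t' b e m u : hstep t Km t' -> hsteps t' b e m u -> hsteps t b e (S m) u.

Inductive canM : term -> Prop :=
| cM_lam p t : canM t -> canM (Lam p t)
| cM_pair t u : canM (Pair t u)
| cM_sub t p1 p2 u : canM t -> canN u -> canM (Sub t (PPair p1 p2) u)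
| cM_N t : canN t -> canM t
with canN : term -> Prop :=
| cN_var x : canN (Var x)
| cN_app t u : canN t -> canN (App t u)
| cN_sub t p1 p2 u : canN t -> canN u -> canN (Sub t (PPair p1 p2) u).

(* |.| ; only meaningful on canonical forms *)
Fixpoint csize (t : term) : nat :=
  match t with
  | Var _ => 0
  | Pair _ _ => 1
  | App s _ => csize s + 1
  | Lam _ s => csize s + 1
  | Sub s _ u => csize s + csize u + 1
  end.

(* types; multi-types are lists taken up to (deep) permutation *)
Inductive ty : Type :=
| TN : ty
| TM : ty
| TProd : list ty -> list ty -> ty
| TArr : list ty -> ty -> ty.

Definition mtype := list ty.

Inductive tequiv : ty -> ty -> Prop :=
| te_N : tequiv TN TN
| te_M : tequiv TM TM
| te_prod A1 A2 B1 B2 : mequiv A1 B1 -> mequiv A2 B2 ->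
    tequiv (TProd A1 A2) (TProd B1 B2)
| te_arr A B s s' : mequiv A B -> tequiv s s' -> tequiv (TArr A s) (TArr B s')
with mequiv : mtype -> mtype -> Prop :=
| me_nil : mequiv [] []
| me_cons s s' A B : tequiv s s' -> mequiv A B -> mequiv (s :: A) (s' :: B)
| me_perm A B C : Permutation A B -> mequiv B C -> mequiv A C.

Definition tight (s : ty) : Prop := s = TN \/ s = TM.
Definition tightm (A : mtype) : Prop := Forall tight A.

Definition ctx := nat -> mtype.
Definition cempty : ctx := fun _ => [].
Definition cunion (G D : ctx) : ctx := fun x => G x ++ D x.
Definition csing (x : nat) (s : ty) : ctx :=
  fun y => if y =? x then [s] else [].
(* Gamma|_p : the multi-types of the nv p leaves of p, in leaf order *)
Definition crestr (G : ctx) (k : nat) : list mtype := map G (seq 0 k).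
Definition cdrop (G : ctx) (k : nat) : ctx := fun x => G (x + k).
Definition tight_ctx (G : ctx) : Prop := forall x, tightm (G x).

(* pattern typing  Gs |-^(e,m,f) p : A, Gs listing the leaves' multi-types *)
Inductive ptyped : list mtype -> pat -> mtype -> nat -> nat -> nat -> Prop :=
| pat_v A : ptyped [A] PVar A 1 0 0
| pat_x Gs Ds p q A B ep mp fp eq mq fq :
    ptyped Gs p A ep mp fp -> ptyped Ds q B eq mq fq ->
    ptyped (Gs ++ Ds) (PPair p q) [TProd A B] (ep + eq) (1 + mp + mq) (fp + fq)
| pat_p Gs p q :
    length Gs = nv (PPair p q) -> Forall tightm Gs ->
    ptyped Gs (PPair p q) [TN] 0 0 1.

Inductive typed : ctx -> term -> ty -> nat -> nat -> nat -> nat -> Prop :=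
| t_ax x s : typed (csing x s) (Var x) s 0 0 0 0
| t_abs G p t s A b e m f ep mp fp :
    typed G t s b e m f ->
    ptyped (crestr G (nv p)) p A ep mp fp ->
    typed (cdrop G (nv p)) (Lam p t) (TArr A s) (b + 1) (e + ep) (m + mp) (f + fp)
| t_abs_p G p t tt b e m f :
    typed G t tt b e m f -> tight tt ->
    Forall tightm (crestr G (nv p)) ->
    typed (cdrop G (nv p)) (Lam p t) TM b e m (f + 1)
| t_app G D t u A A' s bt et mt ft bu eu mu fu :
    typed G t (TArr A s) bt et mt ft ->
    mtyped D u A' bu eu mu fu -> mequiv A A' ->
    typed (cunion G D) (App t u) s (bt + bu) (et + eu) (mt + mu) (ft + fu)
| t_app_p G t u b e m f :
    typed G t TN b e m f -> typed G (App t u) TN b e m (f + 1)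
| t_pair G D t u A B bt et mt ft bu eu mu fu :
    mtyped G t A bt et mt ft -> mtyped D u B bu eu mu fu ->
    typed (cunion G D) (Pair t u) (TProd A B) (bt + bu) (et + eu) (mt + mu) (ft + fu)
| t_pair_p t u : typed cempty (Pair t u) TM 0 0 0 1
| t_match G D t p u s A A' bt et mt ft ep mp fp bu eu mu fu :
    typed G t s bt et mt ft ->
    ptyped (crestr G (nv p)) p A ep mp fp ->
    mtyped D u A' bu eu mu fu -> mequiv A A' ->
    typed (cunion (cdrop G (nv p)) D) (Sub t p u) s
          (bt + bu) (et + eu + ep) (mt + mu + mp) (ft + fu + fp)
with mtyped : ctx -> term -> mtype -> nat -> nat -> nat -> nat -> Prop :=
| m_nil t : mtyped cempty t [] 0 0 0 0
| m_cons G D t s A b e m f b' e' m' f' :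
    typed G t s b e m f -> mtyped D t A b' e' m' f' ->
    mtyped (cunion G D) t (s :: A) (b + b') (e + e') (m + m') (f + f').

(* Canonical forms have tight derivations whose only non-zero counter is the size:
   variable-headed terms get [bullet_N], abstractions and pairs [bullet_M], and a
   blocked match is typed with rule (pat_p).  Head reduction is then reversed step by
   step (subject expansion): a derivation of the reduct yields one of the redex in
   which exactly the counter of the kind of the step grows by one -- the (abs) rule
   for (b), the (pat_x) rule for (m), and anti-substitution for (e).  Expansion only
   permutes the multi-types of the context and replaces the type by an equivalent
   one, so tightness is preserved along the whole reduction sequence. *)

From Stdlib Require Import List Arith PeanoNat Permutation Lia FunctionalExtensionality.
Import ListNotations.

(** * Multiset equivalence of types *)

Lemma tequiv_refl : forall s, tequiv s s.
Proof.
  fix IH 1.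
  (* [Hm] is only used on sub-lists of the argument, which the guard checker accepts. *)
  assert (Hm : forall A, mequiv A A) by (induction A; constructor; auto).
  intros [| | A B | A s]; constructor; auto.
Qed.

Lemma mequiv_refl A : mequiv A A.
Proof. induction A; constructor; auto using tequiv_refl. Qed.

Lemma mequiv_of_perm A B : Permutation A B -> mequiv A B.
Proof. intros P. apply me_perm with B; auto using mequiv_refl. Qed.

Lemma mequiv_of_Forall2 A B : Forall2 tequiv A B -> mequiv A B.
Proof. induction 1; constructor; auto. Qed.

Lemma mequiv_perm_Forall2 A B :
  mequiv A B -> exists A', Permutation A A' /\ Forall2 tequiv A' B.
Proof.
  induction 1 as [| s s' A B Hs _ IH | A B C P _ IH].
  - exists []; auto.
  - destruct IH as (A' & P & F). exists (s :: A'); auto.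
  - destruct IH as (B' & P' & F). exists B'; eauto using perm_trans.
Qed.

Lemma mequiv_perm_r A B C : mequiv A B -> Permutation B C -> mequiv A C.
Proof.
  intros (A' & P & F)%mequiv_perm_Forall2 PBC.
  apply Forall2_flip in F.
  destruct (Permutation_Forall2 PBC F) as (A'' & P' & F').
  apply me_perm with A''; [eauto using perm_trans|].
  apply mequiv_of_Forall2, Forall2_flip, F'.
Qed.

Lemma mequiv_cons_inv s A B :
  mequiv (s :: A) B ->
  exists s' B', Permutation (s' :: B') B /\ tequiv s s' /\ mequiv A B'.
Proof.
  intros (A' & P & F)%mequiv_perm_Forall2.
  destruct (Permutation_Forall2 (Permutation_sym P) F) as (B' & P' & F').
  inversion F' as [| s0 b A0 B'' Hs HA]; subst.
  exists b, B''. split; [now apply Permutation_sym|]. split; [exact Hs|].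
  apply mequiv_of_Forall2, HA.
Qed.

Lemma mequiv_nil_inv A : mequiv [] A -> A = [].
Proof.
  intros (A' & P & F)%mequiv_perm_Forall2.
  apply Permutation_nil in P; subst. now inversion F.
Qed.

Lemma mequiv_singleton_inv s A : mequiv [s] A -> exists s', A = [s'] /\ tequiv s s'.
Proof.
  intros (s' & B & P & Hs & HB%mequiv_nil_inv)%mequiv_cons_inv; subst.
  exists s'. split; [|exact Hs]. now apply Permutation_length_1_inv, Permutation_sym.
Qed.

Scheme tequiv_min := Minimality for tequiv Sort Prop
  with mequiv_min := Minimality for mequiv Sort Prop.
Combined Scheme tequiv_mequiv_ind from tequiv_min, mequiv_min.

Lemma tequiv_mequiv_sym :
  (forall s s', tequiv s s' -> tequiv s' s) /\ (forall A B, mequiv A B -> mequiv B A).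
Proof.
  apply tequiv_mequiv_ind; intros; try (constructor; assumption).
  eapply mequiv_perm_r; eauto using Permutation_sym.
Qed.

Lemma tequiv_sym s s' : tequiv s s' -> tequiv s' s.
Proof. apply tequiv_mequiv_sym. Qed.

Lemma mequiv_sym A B : mequiv A B -> mequiv B A.
Proof. apply tequiv_mequiv_sym. Qed.

Lemma tequiv_mequiv_trans :
  (forall s1 s2, tequiv s1 s2 -> forall s3, tequiv s2 s3 -> tequiv s1 s3) /\
  (forall A B, mequiv A B -> forall C, mequiv B C -> mequiv A C).
Proof.
  apply tequiv_mequiv_ind.
  - trivial.
  - trivial.
  - intros A1 A2 B1 B2 _ IH1 _ IH2 s3 H. inversion H; subst. constructor; auto.
  - intros A B s s' _ IHA _ IHs s3 H. inversion H; subst. constructor; auto.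
  - trivial.
  - intros s s' A B _ IHs _ IHA C (c & C' & P & Hs & HA)%mequiv_cons_inv.
    apply mequiv_perm_r with (c :: C'); [constructor|]; auto.
  - intros A B C P _ IH D HD. apply me_perm with B; auto.
Qed.

Lemma tequiv_trans s1 s2 s3 : tequiv s1 s2 -> tequiv s2 s3 -> tequiv s1 s3.
Proof. intros; eapply tequiv_mequiv_trans; eauto. Qed.

Lemma mequiv_trans A B C : mequiv A B -> mequiv B C -> mequiv A C.
Proof. intros; eapply tequiv_mequiv_trans; eauto. Qed.

Lemma tequiv_TN s : tequiv s TN -> s = TN.
Proof. now inversion 1. Qed.

Lemma tight_tequiv s s' : tequiv s s' -> tight s' -> tight s.
Proof. intros H [-> | ->]; inversion H; [left | right]; reflexivity. Qed.

Lemma tightm_perm A B : Permutation A B -> tightm B -> tightm A.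
Proof. intros P. apply Permutation_Forall, Permutation_sym, P. Qed.

Definition ctx_perm (G G' : ctx) : Prop := forall x, Permutation (G x) (G' x).

Lemma tight_ctx_perm G G' : ctx_perm G G' -> tight_ctx G' -> tight_ctx G.
Proof. intros P T x. exact (tightm_perm _ _ (P x) (T x)). Qed.

Lemma tight_cempty : tight_ctx cempty.
Proof. intros x; constructor. Qed.

Lemma tight_csing x s : tight s -> tight_ctx (csing x s).
Proof. intros T y. unfold csing, tightm. destruct (y =? x); auto. Qed.

Lemma tight_cunion G D : tight_ctx G -> tight_ctx D -> tight_ctx (cunion G D).
Proof. intros TG TD x. apply Forall_app; split; [apply TG | apply TD]. Qed.

Lemma tight_cdrop G k : tight_ctx G -> tight_ctx (cdrop G k).
Proof. intros T x. apply T. Qed.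

Lemma cunion_cempty_r G : cunion G cempty = G.
Proof. extensionality x. apply app_nil_r. Qed.

Lemma cunion_assoc G D E : cunion G (cunion D E) = cunion (cunion G D) E.
Proof. extensionality x. apply app_assoc. Qed.

Lemma cdrop_0 G : cdrop G 0 = G.
Proof. extensionality x. unfold cdrop. now rewrite Nat.add_0_r. Qed.

Lemma cdrop_cunion G D k : cdrop (cunion G D) k = cunion (cdrop G k) (cdrop D k).
Proof. reflexivity. Qed.

Lemma cdrop_cdrop G j k : cdrop (cdrop G j) k = cdrop G (j + k).
Proof. extensionality x. unfold cdrop. f_equal. lia. Qed.

Lemma ctx_perm_refl G : ctx_perm G G.
Proof. intros x. apply Permutation_refl. Qed.

Lemma ctx_perm_cunion G G' D D' :
  ctx_perm G G' -> ctx_perm D D' -> ctx_perm (cunion G D) (cunion G' D').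
Proof. intros PG PD x. apply Permutation_app; auto. Qed.

Lemma ctx_perm_cdrop G G' k : ctx_perm G G' -> ctx_perm (cdrop G k) (cdrop G' k).
Proof. intros P x. apply P. Qed.

Lemma ctx_perm_cunion_swap A B C : ctx_perm (cunion (cunion A B) C) (cunion (cunion A C) B).
Proof.
  intros x. unfold cunion. rewrite <- !app_assoc.
  apply Permutation_app_head, Permutation_app_comm.
Qed.

Lemma crestr_ext G G' k :
  (forall x, x < k -> G x = G' x) -> crestr G k = crestr G' k.
Proof. intros H. apply map_ext_in. intros x Hx%in_seq. apply H. lia. Qed.

Lemma crestr_perm G G' k :
  (forall x, x < k -> Permutation (G x) (G' x)) ->
  Forall2 (@Permutation ty) (crestr G k) (crestr G' k).
Proof.
  intros H. assert (Hin : forall x, In x (seq 0 k) -> Permutation (G x) (G' x))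
    by (intros x Hx%in_seq; apply H; lia).
  unfold crestr. revert Hin. induction (seq 0 k) as [| x l IH]; intros Hin;
    simpl; constructor; auto with datatypes.
Qed.

Lemma crestr_add G j k : crestr G (j + k) = crestr G j ++ crestr (cdrop G j) k.
Proof.
  unfold crestr, cdrop. rewrite seq_app, map_app. f_equal.
  generalize 0 as i. induction k as [| k IH]; intros i; simpl; [reflexivity|].
  f_equal. apply (IH (S i)).
Qed.

Lemma crestr_length G k : length (crestr G k) = k.
Proof. unfold crestr. now rewrite length_map, length_seq. Qed.

Lemma tight_crestr G k : tight_ctx G -> Forall tightm (crestr G k).
Proof. intros T. apply Forall_map, Forall_forall. auto. Qed.

Lemma tight_crestr_perm G G' k :
  ctx_perm G G' -> Forall tightm (crestr G' k) -> Forall tightm (crestr G k).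
Proof.
  intros P T. unfold crestr in *. rewrite Forall_map in *.
  eapply Forall_impl; [| exact T]. intros x. apply tightm_perm, P.
Qed.

Lemma ptyped_perm Gs p A e m f :
  ptyped Gs p A e m f -> forall Gs', Forall2 (@Permutation ty) Gs Gs' ->
  exists A', ptyped Gs' p A' e m f /\ mequiv A A'.
Proof.
  induction 1 as [A | Gs Ds p q A B ep mp fp eq mq fq _ IHp _ IHq | Gs p q Hlen HT];
    intros Gs' F.
  - inversion F as [| ? A' ? ? P F']; inversion F'; subst.
    exists A'. split; [constructor | now apply mequiv_of_perm].
  - apply Forall2_app_inv_l in F as (Gs2 & Ds2 & F1 & F2 & ->).
    destruct (IHp _ F1) as (A' & HA & EA), (IHq _ F2) as (B' & HB & EB).
    exists [TProd A' B']. split; constructor; auto using mequiv_refl. now constructor.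
  - exists [TN]. split; [constructor | apply mequiv_refl].
    + rewrite <- Hlen. symmetry. eapply Forall2_length; eauto.
    + clear Hlen. induction F; inversion HT; constructor; eauto using tightm_perm, Permutation_sym.
Qed.

Lemma ptyped_pair_singleton Gs p q A e m f :
  ptyped Gs (PPair p q) A e m f -> exists a, A = [a].
Proof. inversion 1; eauto. Qed.

(** * Generation lemmas *)

Lemma typed_eq_counters G t s b e m f b' e' m' f' :
  typed G t s b e m f -> b = b' -> e = e' -> m = m' -> f = f' -> typed G t s b' e' m' f'.
Proof. intros H -> -> -> ->. exact H. Qed.

Lemma mtyped_eq_counters G t A b e m f b' e' m' f' :
  mtyped G t A b e m f -> b = b' -> e = e' -> m = m' -> f = f' -> mtyped G t A b' e' m' f'.
Proof. intros H -> -> -> ->. exact H. Qed.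

Lemma typed_Var_inv G x s b e m f :
  typed G (Var x) s b e m f -> G = csing x s /\ b = 0 /\ e = 0 /\ m = 0 /\ f = 0.
Proof. now inversion 1. Qed.

Lemma typed_Lam_inv G p t s b e m f :
  typed G (Lam p t) s b e m f ->
  (exists Gt A s0 b0 e0 m0 f0 ep mp fp, G = cdrop Gt (nv p) /\ s = TArr A s0 /\
     typed Gt t s0 b0 e0 m0 f0 /\ ptyped (crestr Gt (nv p)) p A ep mp fp /\
     b = b0 + 1 /\ e = e0 + ep /\ m = m0 + mp /\ f = f0 + fp) \/
  (exists Gt tt f0, G = cdrop Gt (nv p) /\ s = TM /\ typed Gt t tt b e m f0 /\
     tight tt /\ Forall tightm (crestr Gt (nv p)) /\ f = f0 + 1).
Proof. inversion 1; subst; [left | right]; repeat eexists; eauto. Qed.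

Lemma typed_App_inv G t u s b e m f :
  typed G (App t u) s b e m f ->
  (exists Gt Gu A A' bt et mt ft bu eu mu fu, G = cunion Gt Gu /\
     typed Gt t (TArr A s) bt et mt ft /\ mtyped Gu u A' bu eu mu fu /\ mequiv A A' /\
     b = bt + bu /\ e = et + eu /\ m = mt + mu /\ f = ft + fu) \/
  (s = TN /\ exists f0, typed G t TN b e m f0 /\ f = f0 + 1).
Proof. inversion 1; subst; [left | right]; repeat eexists; eauto. Qed.

Lemma typed_Pair_inv G t u s b e m f :
  typed G (Pair t u) s b e m f ->
  (exists Gt Gu A B bt et mt ft bu eu mu fu, G = cunion Gt Gu /\ s = TProd A B /\
     mtyped Gt t A bt et mt ft /\ mtyped Gu u B bu eu mu fu /\
     b = bt + bu /\ e = et + eu /\ m = mt + mu /\ f = ft + fu) \/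
  (G = cempty /\ s = TM /\ b = 0 /\ e = 0 /\ m = 0 /\ f = 1).
Proof. inversion 1; subst; [left | right]; repeat eexists; eauto. Qed.

Lemma typed_Sub_inv G t p u s b e m f :
  typed G (Sub t p u) s b e m f ->
  exists Gt Gu A A' bt et mt ft bu eu mu fu ep mp fp,
     G = cunion (cdrop Gt (nv p)) Gu /\
     typed Gt t s bt et mt ft /\ ptyped (crestr Gt (nv p)) p A ep mp fp /\
     mtyped Gu u A' bu eu mu fu /\ mequiv A A' /\
     b = bt + bu /\ e = et + eu + ep /\ m = mt + mu + mp /\ f = ft + fu + fp.
Proof. inversion 1; subst; repeat eexists; eauto. Qed.

Lemma mtyped_one {G t s b e m f} : typed G t s b e m f -> mtyped G t [s] b e m f.
Proof.
  intros H. rewrite <- (cunion_cempty_r G).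
  eapply mtyped_eq_counters; [econstructor; [exact H | constructor] | lia ..].
Qed.

Lemma mtyped_one_inv G t s b e m f : mtyped G t [s] b e m f -> typed G t s b e m f.
Proof.
  inversion 1 as [| G1 G2 ? ? ? b1 e1 m1 f1 b2 e2 m2 f2 H1 H2]; subst.
  inversion H2; subst. rewrite cunion_cempty_r.
  eapply typed_eq_counters; [exact H1 | lia ..].
Qed.

Lemma mtyped_app {G D u A B b e m f b' e' m' f'} :
  mtyped G u A b e m f -> mtyped D u B b' e' m' f' ->
  mtyped (cunion G D) u (A ++ B) (b + b') (e + e') (m + m') (f + f').
Proof.
  intros H HB. induction H as [| G1 G2 t s A b e m f b1 e1 m1 f1 Hs _ IH]; simpl.
  - exact HB.
  - rewrite <- cunion_assoc.
    eapply mtyped_eq_counters; [econstructor; [exact Hs | exact (IH HB)] | lia ..].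
Qed.

(** * Tight typability of canonical forms *)

Definition tight_typable (t : term) (b e m f : nat) : Prop :=
  exists G tt, tight_ctx G /\ tight tt /\ typed G t tt b e m f.

Lemma typed_Sub_tight G D t p1 p2 u s f fu :
  tight_ctx G -> typed G t s 0 0 0 f -> typed D u TN 0 0 0 fu ->
  typed (cunion (cdrop G (nv (PPair p1 p2))) D) (Sub t (PPair p1 p2) u) s 0 0 0 (f + fu + 1).
Proof.
  intros TG Ht Hu.
  eapply typed_eq_counters.
  { eapply t_match with (A := [TN]); [exact Ht | | exact (mtyped_one Hu) | apply mequiv_refl].
    apply pat_p; [apply crestr_length | now apply tight_crestr]. }
  all: lia.
Qed.

Scheme canM_min := Minimality for canM Sort Prop
  with canN_min := Minimality for canN Sort Prop.
Combined Scheme can_ind from canM_min, canN_min.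

Lemma canonical_tight_typable :
  (forall u, canM u -> tight_typable u 0 0 0 (csize u)) /\
  (forall u, canN u -> exists G, tight_ctx G /\ typed G u TN 0 0 0 (csize u)).
Proof.
  apply can_ind; simpl.
  - intros p t _ (G & tt & TG & Ttt & H).
    exists (cdrop G (nv p)), TM. repeat split; [now apply tight_cdrop | now right |].
    apply t_abs_p with tt; auto using tight_crestr.
  - intros t u. exists cempty, TM. repeat split; [apply tight_cempty | now right | apply t_pair_p].
  - intros t p1 p2 u _ (G & tt & TG & Ttt & Ht) _ (D & TD & Hu).
    exists (cunion (cdrop G (nv (PPair p1 p2))) D), tt.
    repeat split; [| exact Ttt | now apply typed_Sub_tight].
    apply tight_cunion; [now apply tight_cdrop | exact TD].
  - intros t _ (G & TG & H). exists G, TN. repeat split; [exact TG | now left | exact H].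
  - intros x. exists (csing x TN). split; [apply tight_csing; now left | constructor].
  - intros t u _ (G & TG & H). exists G. split; [exact TG | now apply t_app_p].
  - intros t p1 p2 u _ (G & TG & Ht) _ (D & TD & Hu).
    exists (cunion (cdrop G (nv (PPair p1 p2))) D). split; [| now apply typed_Sub_tight].
    apply tight_cunion; [now apply tight_cdrop | exact TD].
Qed.

(** * Shifting *)

Ltac decide_nat_tests :=
  repeat match goal with
  | |- context [?a <? ?b] => destruct (Nat.ltb_spec a b)
  | |- context [?a =? ?b] => destruct (Nat.eqb_spec a b)
  | |- context [?a <=? ?b] => destruct (Nat.leb_spec a b)
  end.

(* The context of [shift d c t] when [t] is typed in [G]: the [d] fresh indices are unused. *)
Definition cshift (d c : nat) (G : ctx) : ctx :=
  fun x => if x <? c then G x else if x <? c + d then [] else G (x - d).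

Lemma cshift_cempty d c : cshift d c cempty = cempty.
Proof. extensionality x. unfold cshift, cempty. now decide_nat_tests. Qed.

Lemma cshift_cunion d c G D : cshift d c (cunion G D) = cunion (cshift d c G) (cshift d c D).
Proof. extensionality x. unfold cshift, cunion. now decide_nat_tests. Qed.

Lemma cshift_cdrop d c k G : cshift d c (cdrop G k) = cdrop (cshift d (c + k) G) k.
Proof.
  extensionality x. unfold cshift, cdrop. decide_nat_tests; try lia; f_equal; lia.
Qed.

Lemma crestr_cshift d c k G : crestr (cshift d (c + k) G) k = crestr G k.
Proof. apply crestr_ext. intros x Hx. unfold cshift. decide_nat_tests; reflexivity || lia. Qed.

Lemma cshift_csing d c x s :
  csing (if c <=? x then x + d else x) s = cshift d c (csing x s).
Proof.
  extensionality y. unfold cshift, csing.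
  destruct (Nat.leb_spec c x); decide_nat_tests; reflexivity || lia.
Qed.

Lemma mtyped_shift_inv_of t d c :
  (forall G s b e m f, typed G (shift d c t) s b e m f ->
     exists G0, G = cshift d c G0 /\ typed G0 t s b e m f) ->
  forall G A b e m f, mtyped G (shift d c t) A b e m f ->
    exists G0, G = cshift d c G0 /\ mtyped G0 t A b e m f.
Proof.
  intros Ht G A b e m f H. remember (shift d c t) as T eqn:ET in H.
  induction H as [| G D ? s A b e m f b' e' m' f' Hs _ IH]; subst.
  - exists cempty. split; [symmetry; apply cshift_cempty | constructor].
  - destruct (Ht _ _ _ _ _ _ Hs) as (G0 & -> & H0), (IH eq_refl) as (D0 & -> & HD0).
    exists (cunion G0 D0). split; [symmetry; apply cshift_cunion | now constructor].
Qed.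

Lemma typed_shift_inv t : forall d c G s b e m f,
  typed G (shift d c t) s b e m f -> exists G0, G = cshift d c G0 /\ typed G0 t s b e m f.
Proof.
  induction t as [x | p t IH | t1 IH1 t2 IH2 | t1 IH1 t2 IH2 | t1 IH1 p t2 IH2];
    intros d c G s b e m f H; simpl in H.
  - assert (Hx : typed G (Var (if c <=? x then x + d else x)) s b e m f)
      by (destruct (c <=? x); exact H).
    apply typed_Var_inv in Hx as (-> & -> & -> & -> & ->).
    exists (csing x s). split; [apply cshift_csing | constructor].
  - apply typed_Lam_inv in H
      as [(Gt & A & s0 & b0 & e0 & m0 & f0 & ep & mp & fp & -> & -> & Ht & Hp & -> & -> & -> & ->)
         |(Gt & tt & f0 & -> & -> & Ht & Ttt & Tp & ->)];
      destruct (IH _ _ _ _ _ _ _ _ Ht) as (G0 & -> & H0);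
      rewrite crestr_cshift in *; exists (cdrop G0 (nv p));
      (split; [symmetry; apply cshift_cdrop |]); econstructor; eauto.
  - apply typed_Pair_inv in H
      as [(Gt & Gu & A & B & bt & et & mt & ft & bu & eu & mu & fu &
           -> & -> & Ht & Hu & -> & -> & -> & ->)
         |(-> & -> & -> & -> & -> & ->)].
    + destruct (mtyped_shift_inv_of _ _ _ (IH1 d c) _ _ _ _ _ _ Ht) as (G1 & -> & H1).
      destruct (mtyped_shift_inv_of _ _ _ (IH2 d c) _ _ _ _ _ _ Hu) as (G2 & -> & H2).
      exists (cunion G1 G2). split; [symmetry; apply cshift_cunion | now constructor].
    + exists cempty. split; [symmetry; apply cshift_cempty | constructor].
  - apply typed_App_inv in H
      as [(Gt & Gu & A & A' & bt & et & mt & ft & bu & eu & mu & fu &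
          -> & Ht & Hu & EA & -> & -> & -> & ->)
         |(-> & f0 & Ht & ->)].
    + destruct (IH1 _ _ _ _ _ _ _ _ Ht) as (G1 & -> & H1).
      destruct (mtyped_shift_inv_of _ _ _ (IH2 d c) _ _ _ _ _ _ Hu) as (G2 & -> & H2).
      exists (cunion G1 G2). split; [symmetry; apply cshift_cunion | econstructor; eauto].
    + destruct (IH1 _ _ _ _ _ _ _ _ Ht) as (G1 & -> & H1).
      exists G1. split; [reflexivity | now constructor].
  - apply typed_Sub_inv in H
      as (Gt & Gu & A & A' & bt & et & mt & ft & bu & eu & mu & fu & ep & mp & fp &
          -> & Ht & Hp & Hu & EA & -> & -> & -> & ->).
    destruct (IH1 _ _ _ _ _ _ _ _ Ht) as (G1 & -> & H1).
    destruct (mtyped_shift_inv_of _ _ _ (IH2 d c) _ _ _ _ _ _ Hu) as (G2 & -> & H2).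
    rewrite crestr_cshift in Hp.
    exists (cunion (cdrop G1 (nv p)) G2).
    split; [now rewrite cshift_cunion, cshift_cdrop | econstructor; eauto].
Qed.

Lemma mtyped_shift_inv t d c G A b e m f :
  mtyped G (shift d c t) A b e m f -> exists G0, G = cshift d c G0 /\ mtyped G0 t A b e m f.
Proof. apply mtyped_shift_inv_of. intros. now apply typed_shift_inv. Qed.

(** * Anti-substitution *)

(* [G] types [subst c u t] when [G1] types [t] and [D] types [u] at the multi-type
   [G1 c]: [G] forgets index [c] of [G1] and adds [D], lifted above [c]. *)
Definition subst_ctx_split (c : nat) (G G1 D : ctx) : Prop :=
  (forall x, x < c -> G x = G1 x) /\
  (forall x, c <= x -> Permutation (G x) (G1 (S x) ++ D (x - c))).

Lemma subst_ctx_split_cempty c : subst_ctx_split c cempty cempty cempty.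
Proof. split; reflexivity. Qed.

Lemma subst_ctx_split_cunion c G G1 D G' G1' D' :
  subst_ctx_split c G G1 D -> subst_ctx_split c G' G1' D' ->
  subst_ctx_split c (cunion G G') (cunion G1 G1') (cunion D D').
Proof.
  intros [E P] [E' P']. split; intros x Hx; unfold cunion.
  - now rewrite E, E'.
  - rewrite (P x Hx), (P' x Hx), <- !app_assoc.
    apply Permutation_app_head. rewrite !app_assoc. apply Permutation_app_tail.
    apply Permutation_app_comm.
Qed.

Lemma subst_ctx_split_cdrop c k G G1 D :
  subst_ctx_split (c + k) G G1 D -> subst_ctx_split c (cdrop G k) (cdrop G1 k) D.
Proof.
  intros [E P]. split; intros x Hx; unfold cdrop.
  - apply E. lia.
  - replace (x - c) with (x + k - (c + k)) by lia. apply P. lia.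
Qed.

Lemma subst_ctx_split_csing c x s :
  x <> c ->
  subst_ctx_split c (csing (if x <? c then x else pred x) s) (csing x s) cempty.
Proof.
  intros Hxc. split; intros y Hy; unfold csing, cempty; rewrite ?app_nil_r;
    decide_nat_tests; reflexivity || lia.
Qed.

Lemma mtyped_subst_inv_of u t c :
  (forall G s b e m f, typed G (subst c u t) s b e m f ->
     exists G1 D b1 e1 m1 f1 b2 e2 m2 f2, typed G1 t s b1 e1 m1 f1 /\
       mtyped D u (G1 c) b2 e2 m2 f2 /\ subst_ctx_split c G G1 D /\
       b = b1 + b2 /\ e = e1 + e2 /\ m = m1 + m2 /\ f = f1 + f2) ->
  forall G A b e m f, mtyped G (subst c u t) A b e m f ->
    exists G1 D b1 e1 m1 f1 b2 e2 m2 f2, mtyped G1 t A b1 e1 m1 f1 /\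
      mtyped D u (G1 c) b2 e2 m2 f2 /\ subst_ctx_split c G G1 D /\
      b = b1 + b2 /\ e = e1 + e2 /\ m = m1 + m2 /\ f = f1 + f2.
Proof.
  intros Ht G A b e m f H. remember (subst c u t) as T eqn:ET in H.
  induction H as [| G D ? s A b e m f b' e' m' f' Hs _ IH]; subst.
  - exists cempty, cempty. do 8 exists 0.
    split; [constructor |]. split; [constructor |].
    split; [apply subst_ctx_split_cempty | lia].
  - destruct (Ht _ _ _ _ _ _ Hs)
      as (G1 & D1 & b1 & e1 & m1 & f1 & b2 & e2 & m2 & f2 & H1 & Hu1 & S1 & -> & -> & -> & ->).
    destruct (IH eq_refl)
      as (G2 & D2 & b3 & e3 & m3 & f3 & b4 & e4 & m4 & f4 & H2 & Hu2 & S2 & -> & -> & -> & ->).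
    exists (cunion G1 G2), (cunion D1 D2). do 8 eexists.
    split; [econstructor; eassumption |]. split; [exact (mtyped_app Hu1 Hu2) |].
    split; [now apply subst_ctx_split_cunion | lia].
Qed.

Lemma typed_subst_Var_inv u x c G s b e m f :
  typed G (subst c u (Var x)) s b e m f ->
  exists G1 D b1 e1 m1 f1 b2 e2 m2 f2, typed G1 (Var x) s b1 e1 m1 f1 /\
    mtyped D u (G1 c) b2 e2 m2 f2 /\ subst_ctx_split c G G1 D /\
    b = b1 + b2 /\ e = e1 + e2 /\ m = m1 + m2 /\ f = f1 + f2.
Proof.
  intros H. simpl in H.
  destruct (Nat.eqb_spec x c) as [-> | Hxc].
  - rewrite Nat.ltb_irrefl in H.
    apply typed_shift_inv in H as (Gu & -> & Hu).
    exists (csing c s), Gu. do 4 exists 0. do 4 eexists.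
    split; [constructor |]. split.
    { unfold csing. rewrite Nat.eqb_refl. exact (mtyped_one Hu). }
    split; [| lia].
    split; intros y Hy; unfold cshift, csing; decide_nat_tests; reflexivity || lia.
  - assert (Hx : typed G (Var (if x <? c then x else pred x)) s b e m f)
      by (destruct (x <? c); exact H).
    apply typed_Var_inv in Hx as (-> & -> & -> & -> & ->).
    exists (csing x s), cempty. do 8 exists 0.
    split; [constructor |]. split.
    { unfold csing. apply Nat.eqb_neq in Hxc. rewrite Nat.eqb_sym, Hxc. constructor. }
    split; [now apply subst_ctx_split_csing | lia].
Qed.

Lemma typed_subst_inv u t : forall c G s b e m f,
  typed G (subst c u t) s b e m f ->
  exists G1 D b1 e1 m1 f1 b2 e2 m2 f2, typed G1 t s b1 e1 m1 f1 /\
    mtyped D u (G1 c) b2 e2 m2 f2 /\ subst_ctx_split c G G1 D /\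
    b = b1 + b2 /\ e = e1 + e2 /\ m = m1 + m2 /\ f = f1 + f2.
Proof.
  induction t as [x | p t IH | t1 IH1 t2 IH2 | t1 IH1 t2 IH2 | t1 IH1 p t2 IH2];
    intros c G s b e m f H; simpl in H.
  - exact (typed_subst_Var_inv _ _ _ _ _ _ _ _ _ H).
  - apply typed_Lam_inv in H
      as [(Gt & A & s0 & b0 & e0 & m0 & f0 & ep & mp & fp & -> & -> & Ht & Hp & -> & -> & -> & ->)
         |(Gt & tt & f0 & -> & -> & Ht & Ttt & Tp & ->)];
      destruct (IH _ _ _ _ _ _ _ Ht)
        as (G1 & D & b1 & e1 & m1 & f1 & b2 & e2 & m2 & f2 & H1 & Hu & Sp & -> & -> & -> & ->);
      assert (Er : crestr Gt (nv p) = crestr G1 (nv p))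
        by (apply crestr_ext; intros; apply Sp; lia);
      rewrite Er in *;
      exists (cdrop G1 (nv p)), D; do 8 eexists;
      (split; [econstructor; eauto |]);
      (split; [exact Hu |]);
      (split; [now apply subst_ctx_split_cdrop | lia]).
  - apply typed_Pair_inv in H
      as [(Gt & Gu & A & B & bt & et & mt & ft & bu & eu & mu & fu &
           -> & -> & Ht & Hu & -> & -> & -> & ->)
         |(-> & -> & -> & -> & -> & ->)].
    + destruct (mtyped_subst_inv_of _ _ _ (IH1 c) _ _ _ _ _ _ Ht)
        as (G1 & D1 & b1 & e1 & m1 & f1 & b2 & e2 & m2 & f2 & H1 & Hu1 & S1 & -> & -> & -> & ->).
      destruct (mtyped_subst_inv_of _ _ _ (IH2 c) _ _ _ _ _ _ Hu)
        as (G2 & D2 & b3 & e3 & m3 & f3 & b4 & e4 & m4 & f4 & H2 & Hu2 & S2 & -> & -> & -> & ->).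
      exists (cunion G1 G2), (cunion D1 D2). do 8 eexists.
      split; [econstructor; eassumption |]. split; [exact (mtyped_app Hu1 Hu2) |].
      split; [now apply subst_ctx_split_cunion | lia].
    + exists cempty, cempty. exists 0, 0, 0, 1. do 4 exists 0.
      split; [constructor |]. split; [constructor |].
      split; [apply subst_ctx_split_cempty | lia].
  - apply typed_App_inv in H
      as [(Gt & Gu & A & A' & bt & et & mt & ft & bu & eu & mu & fu &
          -> & Ht & Hu & EA & -> & -> & -> & ->)
         |(-> & f0 & Ht & ->)].
    + destruct (IH1 _ _ _ _ _ _ _ Ht)
        as (G1 & D1 & b1 & e1 & m1 & f1 & b2 & e2 & m2 & f2 & H1 & Hu1 & S1 & -> & -> & -> & ->).
      destruct (mtyped_subst_inv_of _ _ _ (IH2 c) _ _ _ _ _ _ Hu)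
        as (G2 & D2 & b3 & e3 & m3 & f3 & b4 & e4 & m4 & f4 & H2 & Hu2 & S2 & -> & -> & -> & ->).
      exists (cunion G1 G2), (cunion D1 D2). do 8 eexists.
      split; [econstructor; eassumption |]. split; [exact (mtyped_app Hu1 Hu2) |].
      split; [now apply subst_ctx_split_cunion | lia].
    + destruct (IH1 _ _ _ _ _ _ _ Ht)
        as (G1 & D1 & b1 & e1 & m1 & f1 & b2 & e2 & m2 & f2 & H1 & Hu1 & S1 & -> & -> & -> & ->).
      exists G1, D1. do 8 eexists.
      split; [eapply t_app_p; exact H1 |]. split; [exact Hu1 |]. split; [exact S1 | lia].
  - apply typed_Sub_inv in H
      as (Gt & Gu & A & A' & bt & et & mt & ft & bu & eu & mu & fu & ep & mp & fp &
          -> & Ht & Hp & Hu & EA & -> & -> & -> & ->).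
    destruct (IH1 _ _ _ _ _ _ _ Ht)
      as (G1 & D1 & b1 & e1 & m1 & f1 & b2 & e2 & m2 & f2 & H1 & Hu1 & S1 & -> & -> & -> & ->).
    destruct (mtyped_subst_inv_of _ _ _ (IH2 c) _ _ _ _ _ _ Hu)
      as (G2 & D2 & b3 & e3 & m3 & f3 & b4 & e4 & m4 & f4 & H2 & Hu2 & S2 & -> & -> & -> & ->).
    assert (Er : crestr Gt (nv p) = crestr G1 (nv p))
      by (apply crestr_ext; intros; apply S1; lia).
    rewrite Er in Hp.
    exists (cunion (cdrop G1 (nv p)) G2), (cunion D1 D2). do 8 eexists.
    split; [econstructor; eassumption |]. split; [exact (mtyped_app Hu1 Hu2) |].
    split; [apply subst_ctx_split_cunion; [now apply subst_ctx_split_cdrop | exact S2] | lia].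
Qed.

(** * List contexts *)

(* Plugging a term typed in [GX] into [L] gives a term typed in [G]; the
   substitutions of [L] contribute the counters [b e m f]. *)
Fixpoint lctx_typed (L : lctx) (GX G : ctx) (b e m f : nat) : Prop :=
  match L with
  | Hole => G = GX /\ b = 0 /\ e = 0 /\ m = 0 /\ f = 0
  | LSub L' p u => exists G1 b1 e1 m1 f1 A A' ep mp fp D bu eu mu fu,
      lctx_typed L' GX G1 b1 e1 m1 f1 /\ ptyped (crestr G1 (nv p)) p A ep mp fp /\
      mtyped D u A' bu eu mu fu /\ mequiv A A' /\ G = cunion (cdrop G1 (nv p)) D /\
      b = b1 + bu /\ e = e1 + eu + ep /\ m = m1 + mu + mp /\ f = f1 + fu + fp
  end.

Lemma typed_plug_inv L : forall G X s b e m f,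
  typed G (plug L X) s b e m f ->
  exists GX bX eX mX fX bL eL mL fL, typed GX X s bX eX mX fX /\
    lctx_typed L GX G bL eL mL fL /\
    b = bX + bL /\ e = eX + eL /\ m = mX + mL /\ f = fX + fL.
Proof.
  induction L as [| L IH p u]; intros G X s b e m f H; simpl in H.
  - exists G, b, e, m, f, 0, 0, 0, 0. repeat split; auto; lia.
  - apply typed_Sub_inv in H
      as (Gt & Gu & A & A' & bt & et & mt & ft & bu & eu & mu & fu & ep & mp & fp &
          -> & Ht & Hp & Hu & EA & -> & -> & -> & ->).
    destruct (IH _ _ _ _ _ _ _ Ht)
      as (GX & bX & eX & mX & fX & bL & eL & mL & fL & HX & HL & -> & -> & -> & ->).
    exists GX, bX, eX, mX, fX. do 4 eexists. split; [exact HX |]. split.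
    + simpl. do 15 eexists. repeat split; eauto.
    + repeat split; lia.
Qed.

Lemma typed_plug L : forall GX G bL eL mL fL X s bX eX mX fX,
  lctx_typed L GX G bL eL mL fL -> typed GX X s bX eX mX fX ->
  typed G (plug L X) s (bX + bL) (eX + eL) (mX + mL) (fX + fL).
Proof.
  induction L as [| L IH p u]; intros GX G bL eL mL fL X s bX eX mX fX HL HX; simpl in *.
  - destruct HL as (-> & -> & -> & -> & ->). eapply typed_eq_counters; eauto; lia.
  - destruct HL as (G1 & b1 & e1 & m1 & f1 & A & A' & ep & mp & fp & D & bu & eu & mu & fu &
                    HL & Hp & Hu & EA & -> & -> & -> & -> & ->).
    eapply typed_eq_counters; [econstructor; eauto | lia ..].
Qed.

Arguments typed_plug {L GX G bL eL mL fL X s bX eX mX fX}.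

Lemma lctx_typed_transport L : forall GX G bL eL mL fL,
  lctx_typed L GX G bL eL mL fL ->
  exists R, G = cunion (cdrop GX (nb L)) R /\
    forall GX', (forall x, x < nb L -> GX' x = GX x) ->
      lctx_typed L GX' (cunion (cdrop GX' (nb L)) R) bL eL mL fL.
Proof.
  induction L as [| L IH p u]; intros GX G bL eL mL fL HL; simpl in *.
  - destruct HL as (-> & -> & -> & -> & ->). exists cempty.
    split; [now rewrite cunion_cempty_r, cdrop_0 |].
    intros GX' _. rewrite cunion_cempty_r, cdrop_0. repeat split.
  - destruct HL as (G1 & b1 & e1 & m1 & f1 & A & A' & ep & mp & fp & D & bu & eu & mu & fu &
                    HL & Hp & Hu & EA & -> & -> & -> & -> & ->).
    destruct (IH _ _ _ _ _ _ HL) as (R & -> & HR).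
    exists (cunion (cdrop R (nv p)) D). split.
    + now rewrite cdrop_cunion, cdrop_cdrop, cunion_assoc.
    + intros GX' Hagree.
      exists (cunion (cdrop GX' (nb L)) R). do 14 eexists.
      split; [apply HR; intros; apply Hagree; lia |].
      split.
      { erewrite crestr_ext; [exact Hp |].
        intros x Hx. unfold cunion, cdrop. rewrite Hagree by lia. reflexivity. }
      split; [exact Hu |]. split; [exact EA |].
      split; [now rewrite cdrop_cunion, cdrop_cdrop, cunion_assoc | repeat split].
Qed.

(** * Subject expansion *)

Definition kind_b (k : kind) : nat := match k with Kb => 1 | _ => 0 end.
Definition kind_e (k : kind) : nat := match k with Ke => 1 | _ => 0 end.
Definition kind_m (k : kind) : nat := match k with Km => 1 | _ => 0 end.

Definition expands (t : term) (k : kind) (t' : term) : Prop :=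
  forall G' s' b e m f, typed G' t' s' b e m f ->
  exists G s, ctx_perm G G' /\ tequiv s s' /\
    typed G t s (kind_b k + b) (kind_e k + e) (kind_m k + m) f.

Lemma expands_beta L p s0 u :
  expands (App (plug L (Lam p s0)) u) Kb (plug L (Sub s0 p (shift (nb L) 0 u))).
Proof.
  intros G' s b e m f H.
  apply typed_plug_inv in H
    as (GX & bX & eX & mX & fX & bL & eL & mL & fL & HX & HL & -> & -> & -> & ->).
  apply typed_Sub_inv in HX
    as (Gt & Gsh & A & A' & bt & et & mt & ft & bu & eu & mu & fu & ep & mp & fp &
        -> & Ht & Hp & Hu & EA & -> & -> & -> & ->).
  apply mtyped_shift_inv in Hu as (Gu & -> & Hu).
  destruct (lctx_typed_transport _ _ _ _ _ _ _ HL) as (R & -> & HR).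
  assert (HL' : lctx_typed L (cdrop Gt (nv p)) (cunion (cdrop (cdrop Gt (nv p)) (nb L)) R)
                  bL eL mL fL).
  { apply HR. intros x Hx. unfold cunion, cshift.
    decide_nat_tests; [lia | now rewrite app_nil_r | lia]. }
  assert (Hlam : typed (cdrop Gt (nv p)) (Lam p s0) (TArr A s)
                   (bt + 1) (et + ep) (mt + mp) (ft + fp)) by (econstructor; eauto).
  exists (cunion (cunion (cdrop (cdrop Gt (nv p)) (nb L)) R) Gu), s. split; [| split].
  - replace (cdrop (cunion (cdrop Gt (nv p)) (cshift (nb L) 0 Gu)) (nb L))
      with (cunion (cdrop (cdrop Gt (nv p)) (nb L)) Gu).
    + apply ctx_perm_cunion_swap.
    + extensionality x. unfold cunion, cdrop, cshift.
      decide_nat_tests; try lia. do 2 f_equal. lia.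
  - apply tequiv_refl.
  - eapply typed_eq_counters;
      [econstructor; [exact (typed_plug HL' Hlam) | exact Hu | exact EA] | simpl; lia ..].
Qed.

Lemma expands_match L p1 p2 s u1 u2 :
  expands (Sub s (PPair p1 p2) (plug L (Pair u1 u2))) Km
    (plug L (Sub (Sub (shift (nb L) (nv p1 + nv p2) s) p1 (shift (nv p2) 0 u1)) p2 u2)).
Proof.
  intros G' s' b e m f H.
  apply typed_plug_inv in H
    as (GX & bX & eX & mX & fX & bL & eL & mL & fL & HX & HL & -> & -> & -> & ->).
  apply typed_Sub_inv in HX
    as (G1 & D2 & A2 & A2' & bt & et & mt & ft & bu2 & eu2 & mu2 & fu2 & ep2 & mp2 & fp2 &
        -> & H1 & Hp2 & Hu2 & EA2 & -> & -> & -> & ->).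
  apply typed_Sub_inv in H1
    as (G0 & D1 & A1 & A1' & b0 & e0 & m0 & f0 & bu1 & eu1 & mu1 & fu1 & ep1 & mp1 & fp1 &
        -> & H0 & Hp1 & Hu1 & EA1 & -> & -> & -> & ->).
  apply mtyped_shift_inv in Hu1 as (D1u & -> & Hu1).
  apply typed_shift_inv in H0 as (G0u & -> & H0).
  destruct (lctx_typed_transport _ _ _ _ _ _ _ HL) as (R & -> & HR).
  assert (HL' : lctx_typed L (cunion D1u D2) (cunion (cdrop (cunion D1u D2) (nb L)) R)
                  bL eL mL fL).
  { apply HR. intros x Hx. unfold cunion, cdrop, cshift.
    decide_nat_tests; try lia. now rewrite Nat.add_sub. }
  assert (Hpair : typed (cunion D1u D2) (Pair u1 u2) (TProd A1' A2')
                    (bu1 + bu2) (eu1 + eu2) (mu1 + mu2) (fu1 + fu2)) by (now constructor).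
  assert (Hp : ptyped (crestr G0u (nv (PPair p1 p2))) (PPair p1 p2) [TProd A1 A2]
                 (ep1 + ep2) (1 + mp1 + mp2) (fp1 + fp2)).
  { simpl nv. rewrite crestr_add. constructor.
    - erewrite crestr_ext; [exact Hp1 |].
      intros x Hx. unfold cshift. decide_nat_tests; reflexivity || lia.
    - erewrite crestr_ext; [exact Hp2 |].
      intros x Hx. unfold cunion, cdrop, cshift. decide_nat_tests; try lia.
      now rewrite app_nil_r. }
  exists (cunion (cdrop G0u (nv (PPair p1 p2))) (cunion (cdrop (cunion D1u D2) (nb L)) R)), s'.
  split; [| split].
  - intros x. unfold cunion, cdrop, cshift. simpl nv. decide_nat_tests; try lia.
    replace (x + nb L + nv p2 + nv p1 - nb L) with (x + (nv p1 + nv p2)) by lia.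
    rewrite Nat.add_sub, !app_assoc. apply Permutation_refl.
  - apply tequiv_refl.
  - eapply typed_eq_counters.
    { econstructor; [exact H0 | exact Hp | exact (mtyped_one (typed_plug HL' Hpair)) |].
      repeat constructor; assumption. }
    all: simpl; lia.
Qed.

Lemma expands_subst s u : expands (Sub s PVar u) Ke (subst 0 u s).
Proof.
  intros G' s' b e m f H.
  apply typed_subst_inv in H
    as (G1 & D & b1 & e1 & m1 & f1 & b2 & e2 & m2 & f2 & H1 & Hu & [_ Sp] & -> & -> & -> & ->).
  exists (cunion (cdrop G1 (nv PVar)) D), s'. split; [| split].
  - intros x. apply Permutation_sym. unfold cunion, cdrop.
    rewrite Nat.add_1_r. specialize (Sp x (Nat.le_0_l x)). now rewrite Nat.sub_0_r in Sp.
  - apply tequiv_refl.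
  - eapply typed_eq_counters;
      [econstructor; [exact H1 | constructor | exact Hu | apply mequiv_refl] | simpl; lia ..].
Qed.

Lemma expands_Lam p t k t' : expands t k t' -> expands (Lam p t) k (Lam p t').
Proof.
  intros IH G' s' b e m f H.
  apply typed_Lam_inv in H
    as [(Gt & A & s0 & b0 & e0 & m0 & f0 & ep & mp & fp & -> & -> & Ht & Hp & -> & -> & -> & ->)
       |(Gt & tt & f0 & -> & -> & Ht & Ttt & Tp & ->)];
    destruct (IH _ _ _ _ _ _ Ht) as (G & s1 & P & Es & H).
  - destruct (ptyped_perm _ _ _ _ _ _ Hp (crestr G (nv p))) as (A2 & Hp2 & EA).
    { apply crestr_perm. intros x _. apply Permutation_sym, P. }
    exists (cdrop G (nv p)), (TArr A2 s1). split; [| split].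
    + now apply ctx_perm_cdrop.
    + constructor; [now apply mequiv_sym | exact Es].
    + eapply typed_eq_counters; [econstructor; eauto | lia ..].
  - exists (cdrop G (nv p)), TM. split; [| split].
    + now apply ctx_perm_cdrop.
    + constructor.
    + eapply t_abs_p; [exact H | eapply tight_tequiv; eauto | eapply tight_crestr_perm; eauto].
Qed.

Lemma expands_App t k t' u : expands t k t' -> expands (App t u) k (App t' u).
Proof.
  intros IH G' s' b e m f H.
  apply typed_App_inv in H
    as [(Gt & Gu & A & A' & bt & et & mt & ft & bu & eu & mu & fu &
         -> & Ht & Hu & EA & -> & -> & -> & ->)
       |(-> & f0 & Ht & ->)];
    destruct (IH _ _ _ _ _ _ Ht) as (G & s1 & P & Es & H).
  - inversion Es as [| | | B ? s2 ? EB Es2]; subst.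
    exists (cunion G Gu), s2. split; [| split].
    + apply ctx_perm_cunion; [exact P | apply ctx_perm_refl].
    + exact Es2.
    + eapply typed_eq_counters;
        [econstructor; [exact H | exact Hu | eapply mequiv_trans; eauto] | lia ..].
  - apply tequiv_TN in Es as ->.
    exists G, TN. split; [exact P | split; [constructor |]].
    eapply typed_eq_counters; [apply t_app_p, H | lia ..].
Qed.

Lemma expands_Sub_l t p u k t' : expands t k t' -> expands (Sub t p u) k (Sub t' p u).
Proof.
  intros IH G' s' b e m f H.
  apply typed_Sub_inv in H
    as (Gt & Gu & A & A' & bt & et & mt & ft & bu & eu & mu & fu & ep & mp & fp &
        -> & Ht & Hp & Hu & EA & -> & -> & -> & ->).
  destruct (IH _ _ _ _ _ _ Ht) as (G & s1 & P & Es & H).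
  destruct (ptyped_perm _ _ _ _ _ _ Hp (crestr G (nv p))) as (A2 & Hp2 & EA2).
  { apply crestr_perm. intros x _. apply Permutation_sym, P. }
  exists (cunion (cdrop G (nv p)) Gu), s1. split; [| split].
  - apply ctx_perm_cunion; [now apply ctx_perm_cdrop | apply ctx_perm_refl].
  - exact Es.
  - eapply typed_eq_counters.
    { econstructor; [exact H | exact Hp2 | exact Hu |].
      eapply mequiv_trans; [apply mequiv_sym |]; eauto. }
    all: lia.
Qed.

Lemma expands_Sub_r t p1 p2 u k u' :
  expands u k u' -> expands (Sub t (PPair p1 p2) u) k (Sub t (PPair p1 p2) u').
Proof.
  intros IH G' s' b e m f H.
  apply typed_Sub_inv in H
    as (Gt & Gu & A & A' & bt & et & mt & ft & bu & eu & mu & fu & ep & mp & fp &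
        -> & Ht & Hp & Hu & EA & -> & -> & -> & ->).
  destruct (ptyped_pair_singleton _ _ _ _ _ _ _ Hp) as (a & ->).
  apply mequiv_singleton_inv in EA as (a' & -> & Ea).
  apply mtyped_one_inv in Hu.
  destruct (IH _ _ _ _ _ _ Hu) as (G & s1 & P & Es & H).
  exists (cunion (cdrop Gt (nv (PPair p1 p2))) G), s'. split; [| split].
  - apply ctx_perm_cunion; [apply ctx_perm_refl | exact P].
  - apply tequiv_refl.
  - eapply typed_eq_counters.
    { econstructor; [exact Ht | exact Hp | exact (mtyped_one H) |].
      constructor; [eapply tequiv_trans; [exact Ea | now apply tequiv_sym] | constructor]. }
    all: lia.
Qed.

Lemma hstep_expands t : forall k t', hstep t k t' -> expands t k t'.
Proof.
  induction t as [x | p t IH | t1 IH1 t2 IH2 | t1 IH1 t2 IH2 | t1 IH1 p t2 IH2];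
    intros k t' Hs; simpl in Hs.
  - contradiction.
  - destruct Hs as (s' & Hs & ->). now apply expands_Lam, IH.
  - contradiction.
  - destruct Hs as [(-> & L & p & s0 & -> & ->) | (_ & s' & Hs & ->)].
    + apply expands_beta.
    + now apply expands_App, IH1.
  - destruct Hs as [(-> & _ & p1 & p2 & L & u1 & u2 & -> & -> & ->)
                  |[(-> & _ & -> & ->)
                  |[(s' & Hs & ->)
                  |(_ & Hp & u' & Hs & ->)]]].
    + apply expands_match.
    + apply expands_subst.
    + now apply expands_Sub_l, IH1.
    + destruct p as [| p1 p2]; [congruence |]. now apply expands_Sub_r, IH2.
Qed.

Lemma tight_typable_expand t k t' b e m f :
  hstep t k t' -> tight_typable t' b e m f ->
  tight_typable t (kind_b k + b) (kind_e k + e) (kind_m k + m) f.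
Proof.
  intros Hs (G' & tt & TG & Ttt & H).
  destruct (hstep_expands _ _ _ Hs _ _ _ _ _ _ H) as (G & s & P & Es & Ht).
  exists G, s. split; [| split].
  - now apply tight_ctx_perm with G'.
  - now apply tight_tequiv with tt.
  - exact Ht.
Qed.

Theorem theorem3 (t u : term) (b e m : nat) :
  hsteps t b e m u -> canM u ->
  exists (G : ctx) (tt : ty),
    tight_ctx G /\ tight tt /\ typed G t tt b e m (csize u).
Proof.
  intros Hsteps Hu.
  induction Hsteps as [t | t t' b e m u Hs _ IH | t t' b e m u Hs _ IH | t t' b e m u Hs _ IH].
  - now apply canonical_tight_typable.
  - exact (tight_typable_expand _ _ _ _ _ _ _ Hs (IH Hu)).
  - exact (tight_typable_expand _ _ _ _ _ _ _ Hs (IH Hu)).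
  - exact (tight_typable_expand _ _ _ _ _ _ _ Hs (IH Hu)).
Qed.
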